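(* Let $X$ be a finite simple graph and let $k=\alpha_q(X)$. Then $\alpha_q(X)>\alpha(X)$ if and only if every quantum $k$-coclique matrix $P=(P_{vi})$ for $X$ (in any dimension $d$) is Kochen–Specker, i.e. there is no choice of vertices $v_1,\dots,v_k\in V(X)$ such that $P_{v_i i}P_{v_j j}\neq 0$ for all $i\neq j$ in $[k]$.
   Context: All graphs are finite and simple; $\alpha(X)$ is the independence number of $X$. For a finite simple graph $X$ and positive integers $s,d$, a quantum $s$-coclique matrix (in dimension $d$) is a $|V(X)|\times s$ array $P=(P_{vi})_{v\in V(X),\, i\in[s]}$ of orthogonal projections $P_{vi}\in\mathbb{C}^{d\times d}$ such that (a) $\sum_{v\in V(X)}P_{vi}=I_d$ for every $i\in[s]$; (b) $P_{vi}P_{uj}=0$ for all $i\neq j$ in $[s]$ and all adjacent vertices $u\sim v$; (c) $P_{vi}P_{vj}=0$ for all $v\in V(X)$ and all $i\neq j$ in $[s]$. The quantum independence number $\alpha_q(X)$ is the largest $s$ such that a quantum $s$-coclique matrix for $X$ exists for some $d\ge 1$. (In the paper's terminology, the condition on $P$ says that the orthogonality graph of the entries of $P$, with the columns $\{P_{vi}:v\in V(X)\}$ as the cliques, is a projective Kochen–Specker graph: every transversal choosing one entry from each column contains two orthogonal entries, where projections $A,B$ are orthogonal iff $\operatorname{tr}(AB)=0$, equivalently $AB=0$.) *)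

From HB Require Import structures.
From mathcomp Require Import all_boot all_order all_algebra.
From mathcomp Require Import complex.
From mathcomp Require Import Rstruct.
Set Implicit Arguments. Unset Strict Implicit. Unset Printing Implicit Defensive.
Import Order.TTheory GRing.Theory Num.Theory.
Local Open Scope ring_scope.

Definition CC : Type := complex Rdefinitions.R.

Definition adjmx (d : nat) (A : 'M[CC]_d) : 'M[CC]_d := map_mx Num.conj (A^T).

Definition is_proj (d : nat) (A : 'M[CC]_d) : Prop :=
  A *m A = A /\ adjmx A = A.

Definition simple_graph (T : finType) (adj : rel T) : Prop :=
  symmetric adj /\ irreflexive adj.

Definition independent (T : finType) (adj : rel T) (S : {set T}) : bool :=
  [forall u in S, forall v in S, ~~ adj u v].

Definition alpha (T : finType) (adj : rel T) : nat :=
  \max_(S : {set T} | independent adj S) #|S|.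

Definition qcoclique (T : finType) (adj : rel T) (s d : nat)
  (P : T -> 'I_s -> 'M[CC]_d) : Prop :=
  [/\ (forall v i, is_proj (P v i)),
      (forall i, \sum_(v : T) P v i = 1%:M),
      (forall (i j : 'I_s) (u v : T), i != j -> adj u v -> P v i *m P u j = 0)
    & (forall (v : T) (i j : 'I_s), i != j -> P v i *m P v j = 0)].

Definition has_qcoclique (T : finType) (adj : rel T) (s : nat) : Prop :=
  exists (d : nat) (P : T -> 'I_s -> 'M[CC]_d.+1), qcoclique adj P.

Definition is_alpha_q (T : finType) (adj : rel T) (k : nat) : Prop :=
  [/\ (0 < k)%N, has_qcoclique adj k & forall s, (0 < s)%N -> has_qcoclique adj s -> (s <= k)%N].

Definition kochen_specker (T : finType) (k d : nat) (P : T -> 'I_k -> 'M[CC]_d) : Prop :=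
  ~ exists f : 'I_k -> T,
      forall i j : 'I_k, i != j -> P (f i) i *m P (f j) j != 0.

(* A transversal of a quantum k-coclique matrix with pairwise non-orthogonal
   entries is an injective map from [k] onto an independent set of X: distinct
   colours cannot share a vertex (condition (c)) and adjacent vertices cannot
   carry distinct colours (condition (b)).  Conversely an independent set of
   size k yields the classical 0/1 coclique matrix P_vi = [v = v_i], which is
   not Kochen-Specker.  Hence alpha(X) < k iff every quantum k-coclique matrix
   is Kochen-Specker, for every k. *)
From HB Require Import structures.
From mathcomp Require Import all_boot all_order all_algebra.
From mathcomp Require Import complex Rstruct.
Set Implicit Arguments. Unset Strict Implicit. Unset Printing Implicit Defensive.
Local Open Scope ring_scope.
Import GRing.Theory.

Lemma is_proj0 (d : nat) : is_proj (0 : 'M[CC]_d).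
Proof. by rewrite /is_proj /adjmx mul0mx trmx0 map_mx0. Qed.

Lemma is_proj1 (d : nat) : is_proj (1%:M : 'M[CC]_d).
Proof. by rewrite /is_proj /adjmx mul1mx trmx1 map_mx1. Qed.

Section Coclique.

Variables (T : finType) (adj : rel T).

Definition coclique_map (s : nat) (g : 'I_s -> T) : Prop :=
  injective g /\ forall i j, ~~ adj (g i) (g j).

Lemma independentP (S : {set T}) :
  reflect {in S &, forall u v, ~~ adj u v} (independent adj S).
Proof.
apply: (iffP forall_inP) => [indS u v uS vS | indS u uS].
  by move/forall_inP: (indS u uS); apply.
by apply/forall_inP => v vS; apply: indS.
Qed.

Lemma independent_alpha : exists2 S, independent adj S & #|S| = alpha adj.
Proof.
have ind0 : independent adj set0 by apply/independentP => u; rewrite inE.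
case: (arg_maxnP (fun S : {set T} => #|S|) ind0) => S indS maxS.
exists S => //; apply/eqP; rewrite eqn_leq.
by rewrite (bigmax_sup S) //=; apply/bigmax_leqP.
Qed.

Lemma leq_alpha_coclique_map (s : nat) :
  (s <= alpha adj)%N <-> exists g : 'I_s -> T, coclique_map g.
Proof.
split=> [le_s_alpha | [g [g_inj g_ind]]].
  have [S /independentP indS cardS] := independent_alpha.
  have le_sS : (s <= #|S|)%N by rewrite cardS.
  pose g i := enum_val (widen_ord le_sS i : 'I_#|S|).
  exists g; split=> [i j /enum_val_inj/(congr1 val) /= /val_inj // | i j].
  exact: indS (enum_valP _) (enum_valP _).
have indg : independent adj [set g i | i : 'I_s].
  by apply/independentP => _ _ /imsetP[i _ ->] /imsetP[j _ ->].
by rewrite -[s]card_ord -(card_imset _ g_inj) (bigmax_sup _ indg).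
Qed.

Lemma transversal_coclique_map (s d : nat) (P : T -> 'I_s -> 'M[CC]_d)
    (f : 'I_s -> T) :
  irreflexive adj -> qcoclique adj P ->
  (forall i j, i != j -> P (f i) i *m P (f j) j != 0) -> coclique_map f.
Proof.
move=> adj_irr [_ _ P_adj P_col] f_nz; split.
  move=> i j fij; apply/eqP; apply: contraT => nij.
  by move: (f_nz i j nij); rewrite fij P_col ?eqxx.
move=> i j; have [<- | nij] := eqVneq i j; first by rewrite adj_irr.
apply/negP => adj_ij; have nji : j != i by rewrite eq_sym.
by move: (f_nz j i nji); rewrite (P_adj j i _ _ nji adj_ij) eqxx.
Qed.

Definition classical_qcoclique (s d : nat) (g : 'I_s -> T) :
  T -> 'I_s -> 'M[CC]_d := fun v i => if v == g i then 1%:M else 0.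

Lemma classical_qcoclique_coclique (s d : nat) (g : 'I_s -> T) :
  coclique_map g -> qcoclique adj (classical_qcoclique d g).
Proof.
rewrite /classical_qcoclique => -[g_inj g_ind]; split.
- by move=> v i; case: ifP => _; [apply: is_proj1 | apply: is_proj0].
- move=> i; rewrite (bigD1 (g i)) //= eqxx big1 ?addr0 // => v.
  by move/negbTE ->.
- move=> i j u v nij; case: eqP => [-> | _]; last by rewrite mul0mx.
  case: eqP => [-> | _]; last by rewrite mulmx0.
  by rewrite (negbTE (g_ind j i)).
- move=> v i j nij; case: eqP => [-> | _]; last by rewrite mul0mx.
  by case: eqP => [/g_inj eij | _]; [rewrite eij eqxx in nij | rewrite mulmx0].
Qed.

Lemma classical_qcoclique_not_kochen_specker (s d : nat) (g : 'I_s -> T) :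
  ~ kochen_specker (classical_qcoclique d.+1 g).
Proof.
by apply; exists g => i j _; rewrite /classical_qcoclique !eqxx mul1mx oner_neq0.
Qed.

Lemma alpha_lt_iff_kochen_specker (s : nat) :
  irreflexive adj ->
  (alpha adj < s)%N <->
  (forall (d : nat) (P : T -> 'I_s -> 'M[CC]_d.+1),
     qcoclique adj P -> kochen_specker P).
Proof.
move=> adj_irr; rewrite ltnNge; split=> [alpha_lt d P qP [f f_nz] | allKS].
  move/negP: alpha_lt; apply; apply/leq_alpha_coclique_map.
  by exists f; apply: transversal_coclique_map f_nz.
apply/negP => /leq_alpha_coclique_map[g gP].
exact: classical_qcoclique_not_kochen_specker
  (allKS 0%N _ (classical_qcoclique_coclique 1 gP)).
Qed.

End Coclique.

Theorem mainTheorem4 (T : finType) (adj : rel T) (k : nat) :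
  simple_graph adj ->
  is_alpha_q adj k ->
  ((alpha adj < k)%N <->
   (forall (d : nat) (P : T -> 'I_k -> 'M[CC]_d.+1),
      qcoclique adj P -> kochen_specker P)).
Proof. by move=> [_ adj_irr] _; apply: alpha_lt_iff_kochen_specker. Qed.
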